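(* Let $\Delta=\Delta(n)$ satisfy $\Delta\ge 3$ and $\Delta=o(n^{1/2})$. Any algorithm that, given a vertex set $V$ with $|V|=n$ and a distance oracle for an unknown connected graph $G=(V,E)$ of maximum degree at most $\Delta$, always outputs $E$, must make $\Omega(\Delta n\log n/\log\log n)$ distance queries on some such graph $G$.
   Context: A distance oracle for $G$ receives a pair $(u,v)\in V^2$ and returns the number of edges on a shortest path between $u$ and $v$ in $G$. Graphs are unweighted, undirected and simple. *)

From Stdlib Require Import Reals Arith List Bool.
Import ListNotations.

Definition simple_graph (n : nat) (adj : nat -> nat -> bool) : Prop :=
  (forall u v, adj u v = adj v u) /\
  (forall u, adj u u = false) /\
  (forall u v, adj u v = true -> u < n /\ v < n).

Definition degree (n : nat) (adj : nat -> nat -> bool) (v : nat) : nat :=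
  length (filter (fun u => adj v u) (seq 0 n)).

Definition max_degree_le (n : nat) (adj : nat -> nat -> bool) (D : nat) : Prop :=
  forall v, v < n -> degree n adj v <= D.

Fixpoint is_walk (adj : nat -> nat -> bool) (u : nat) (p : list nat) (v : nat) : Prop :=
  match p with
  | [] => u = v
  | w :: p' => adj u w = true /\ is_walk adj w p' v
  end.

Definition connected (n : nat) (adj : nat -> nat -> bool) : Prop :=
  forall u v, u < n -> v < n -> exists p, is_walk adj u p v.

Fixpoint reach (n : nat) (adj : nat -> nat -> bool) (k : nat) (u v : nat) : bool :=
  match k with
  | 0 => Nat.eqb u v
  | S k' => reach n adj k' u v
            || existsb (fun w => reach n adj k' u w && adj w v) (seq 0 n)
  end.

(* least k <= n with reach k u v (returns n if none such, which never
   happens for u, v in a connected graph). *)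
Fixpoint first_reach (n : nat) (adj : nat -> nat -> bool) (u v : nat) (k fuel : nat) : nat :=
  match fuel with
  | 0 => k
  | S f => if reach n adj k u v then k else first_reach n adj u v (S k) f
  end.

Definition dist_oracle (n : nat) (adj : nat -> nat -> bool) (u v : nat) : nat :=
  first_reach n adj u v 0 n.

(* A (deterministic, adaptive) query algorithm as a decision tree: either
   output an edge relation, or query the oracle on a pair (u,v) and continue
   depending on the answer. *)
Inductive algo : Type :=
| Out : (nat -> nat -> bool) -> algo
| Ask : nat -> nat -> (nat -> algo) -> algo.

Fixpoint run_output (A : algo) (oracle : nat -> nat -> nat) : nat -> nat -> bool :=
  match A with
  | Out f => f
  | Ask u v k => run_output (k (oracle u v)) oracle
  end.

Fixpoint run_cost (A : algo) (oracle : nat -> nat -> nat) : nat :=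
  match A with
  | Out _ => 0
  | Ask u v k => S (run_cost (k (oracle u v)) oracle)
  end.

Definition admissible (n D : nat) (adj : nat -> nat -> bool) : Prop :=
  simple_graph n adj /\ connected n adj /\ max_degree_le n adj D.

Definition reconstructs (n D : nat) (A : algo) : Prop :=
  forall adj, admissible n D adj ->
    forall u v, u < n -> v < n -> run_output A (dist_oracle n adj) u v = adj u v.

(* Information-theoretic argument.  For n vertices and maximum degree D we
   exhibit a large family of admissible graphs, indexed by "layouts": a
   binary heap on {0,...,n-1} (so every vertex is within log2 n steps of the
   root 0) whose leaves carry j = D - 1 blocks of B vertices on a left side and
   j blocks of B vertices on a right side, each of the j^2 pairs of blocks being
   joined by a perfect matching given by a permutation of 'I_B.  Every vertex
   has degree at most D, distinct layouts give distinct edge sets, and all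
   oracle answers lie in a set of about 2 log2 n values.  A decision tree with
   answers in a set of size s making fewer than q queries distinguishes at most
   s^q graphs; since there are (B!)^(j^2) layouts, some layout forces about
   j^2 B log B / log log n queries, i.e. Omega(D n log n / log log n) queries
   when D = o(sqrt n) (the heap forces maximum degree max(3, D), hence D >= 3). *)

From Stdlib Require Import Reals Arith List Lia Lra Bool.
From mathcomp Require all_boot perm zify.
Import ListNotations.
Set Bullet Behavior "Strict Subproofs".

Definition adj_bounded n (adj : nat -> nat -> bool) :=
  forall u v, adj u v = true -> u < n /\ v < n.

Lemma reach_S n adj k u v : reach n adj (S k) u v =
  reach n adj k u v || existsb (fun w => reach n adj k u w && adj w v) (seq 0 n).
Proof. reflexivity. Qed.

Lemma reach_bounds n adj (Hb : adj_bounded n adj) k : forall u v,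
  reach n adj k u v = true -> u = v \/ (u < n /\ v < n).
Proof.
  induction k as [|k IH]; intros u v H.
  - left; apply Nat.eqb_eq; exact H.
  - rewrite reach_S in H.
    apply orb_true_iff in H as [H|H]; [now apply IH|].
    apply existsb_exists in H as [w [Hw H]].
    apply in_seq in Hw. apply andb_true_iff in H as [H1 H2].
    destruct (Hb _ _ H2) as [_ Hv].
    destruct (IH _ _ H1) as [->|[Hu _]]; right; lia.
Qed.

Lemma first_reach_le n adj u v K : reach n adj K u v = true ->
  forall fuel k, k <= K -> first_reach n adj u v k fuel <= K.
Proof.
  intros HK fuel; induction fuel as [|f IH]; intros k Hk; simpl; [lia|].
  destruct (reach n adj k u v) eqn:E; [lia|].
  apply IH. destruct (Nat.eq_dec k K) as [->|]; [congruence|lia].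
Qed.

Lemma first_reach_none n adj u v : (forall k, reach n adj k u v = false) ->
  forall fuel k, first_reach n adj u v k fuel = k + fuel.
Proof.
  intros H fuel; induction fuel as [|f IH]; intros k; simpl; [lia|].
  rewrite H, IH; lia.
Qed.

Lemma reach_front n adj u w v k : u < n -> adj u w = true ->
  reach n adj k w v = true -> reach n adj (S k) u v = true.
Proof.
  intros Hu Huw; revert v; induction k as [|k IH]; intros v H.
  - apply Nat.eqb_eq in H; subst v. rewrite reach_S.
    apply orb_true_iff; right.
    apply existsb_exists; exists u; split; [apply in_seq; lia|].
    simpl; rewrite Nat.eqb_refl; exact Huw.
  - rewrite reach_S in H |- *.
    apply orb_true_iff in H as [H|H].
    + apply orb_true_iff; left. exact (IH _ H).
    + apply orb_true_iff; right.
      apply existsb_exists in H as [x [Hx H]].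
      apply andb_true_iff in H as [H1 H2].
      apply existsb_exists; exists x; split; [exact Hx|].
      rewrite (IH _ H1); exact H2.
Qed.

Lemma walk_reach n adj (Hb : adj_bounded n adj) p : forall u v, u < n ->
  is_walk adj u p v -> reach n adj (length p) u v = true.
Proof.
  induction p as [|w p IH]; simpl; intros u v Hu H.
  - subst; apply Nat.eqb_refl.
  - destruct H as [H1 H2]. apply (reach_front n adj u w); auto.
    apply IH; auto. apply (Hb _ _ H1).
Qed.

Lemma walk_app adj p q u w v : is_walk adj u p w -> is_walk adj w q v ->
  is_walk adj u (p ++ q) v.
Proof.
  revert u; induction p as [|a p IH]; simpl; intros u H1 H2.
  - subst; exact H2.
  - destruct H1; split; eauto.
Qed.

Lemma walk_rev adj (Hs : forall a b, adj a b = adj b a) p : forall u v,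
  is_walk adj u p v -> exists q, length q = length p /\ is_walk adj v q u.
Proof.
  induction p as [|w p IH]; simpl; intros u v H.
  - subst; exists []; simpl; auto.
  - destruct H as [H1 H2]. destruct (IH _ _ H2) as [q [Hl Hq]].
    exists (q ++ [u]); split; [rewrite length_app; simpl; lia|].
    apply (walk_app adj q [u] v w u); [exact Hq|].
    simpl; split; [rewrite Hs; exact H1|reflexivity].
Qed.

Lemma dist_le n adj (Hb : adj_bounded n adj) u v p : u < n ->
  is_walk adj u p v -> dist_oracle n adj u v <= length p.
Proof.
  intros Hu H; unfold dist_oracle. apply first_reach_le; [|lia].
  apply walk_reach; auto.
Qed.

Lemma dist_range n adj (Hb : adj_bounded n adj) u v :
  (u < n /\ v < n) \/ dist_oracle n adj u v = 0 \/ dist_oracle n adj u v = n.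
Proof.
  destruct (Nat.eq_dec u v) as [->|Huv].
  - right; left. unfold dist_oracle. destruct n; simpl; [reflexivity|].
    rewrite Nat.eqb_refl; reflexivity.
  - destruct (Nat.lt_ge_cases u n); destruct (Nat.lt_ge_cases v n); try (left; lia);
    right; right; unfold dist_oracle; rewrite first_reach_none; try lia;
    intros k; destruct (reach n adj k u v) eqn:E; auto;
    destruct (reach_bounds n adj Hb k u v E); lia.
Qed.

Lemma dist_oracle_answers n adj d : adj_bounded n adj ->
  (forall u v, u < n -> v < n -> exists p, length p <= d /\ is_walk adj u p v) ->
  forall u v, dist_oracle n adj u v <= d \/ dist_oracle n adj u v = n.
Proof.
  intros Hb Hwalk u v.
  destruct (dist_range n adj Hb u v) as [[Hu Hv]|[H0|Hn]]; [|lia|now right].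
  left. destruct (Hwalk u v Hu Hv) as [p [Hp Hw]].
  pose proof (dist_le n adj Hb u v p Hu Hw). lia.
Qed.

(* Bits needed to write one oracle answer on the hard instances below:
   answers lie in a set of size 2 log2 n + 2. *)
Definition answer_bits (n : nat) : nat := Nat.log2 (2 * Nat.log2 n + 2) + 1.

Module HardFamily.
Import mathcomp.boot.all_boot mathcomp.fingroup.perm mathcomp.zify.zify.
Set Implicit Arguments. Unset Strict Implicit. Unset Printing Implicit Defensive.

Lemma log2_bounds m : 0 < m -> 2 ^ Nat.log2 m <= m < 2 ^ (Nat.log2 m).+1.
Proof.
  move=> /ltP Hm; have [H1 H2] := Nat.log2_spec m Hm.
  have powE k : Nat.pow 2 k = 2 ^ k by elim: k => [|k IH] //=; rewrite IH expnS.
  by rewrite -!powE; apply/andP; split; [apply/leP|apply/ltP].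
Qed.

Section Layouts.
Variables (n j' b : nat).
(* j blocks of size B on each side. *)
Local Notation j := j'.+1.
Local Notation B := b.+1.
Local Notation layout := {ffun 'I_j * 'I_j -> {perm 'I_B}}.
Hypothesis fits : n %/ 2 + 2 * (j * B) <= n.

(* Vertices from [first_leaf] on are leaves of the heap. *)
Definition first_leaf := n %/ 2.
Definition lpos (s : 'I_j) (x : 'I_B) : nat := first_leaf + s * B + x.
Definition rpos (t : 'I_j) (y : 'I_B) : nat := first_leaf + j * B + t * B + y.

Definition heap_edge u v := (0 < v) && (v < n) && (u == v.-1 %/ 2).
Definition block_edge (p : layout) u v :=
  [exists st : 'I_j * 'I_j, exists x : 'I_B,
      (u == lpos st.1 x) && (v == rpos st.2 (p st x))].
Definition gadj (p : layout) u v :=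
  [|| heap_edge u v, heap_edge v u, block_edge p u v | block_edge p v u].

Lemma lpos_ge s x : first_leaf <= lpos s x. Proof. rewrite /lpos; lia. Qed.
Lemma lpos_lt s x : lpos s x < first_leaf + j * B.
Proof. rewrite /lpos. have := ltn_ord s; have := ltn_ord x. nia. Qed.
Lemma rpos_ge t y : first_leaf + j * B <= rpos t y. Proof. rewrite /rpos; lia. Qed.
Lemma rpos_lt t y : rpos t y < n.
Proof. move: fits; rewrite /rpos /first_leaf. have := ltn_ord t; have := ltn_ord y. nia. Qed.
Lemma lpos_lt_n s x : lpos s x < n.
Proof. have := lpos_lt s x; move: fits; rewrite /first_leaf; lia. Qed.

Lemma lpos_inj s x s' x' : lpos s x = lpos s' x' -> s = s' /\ x = x'.
Proof.
  rewrite /lpos => H.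
  have Hs : (s : nat) = s' by have := ltn_ord x; have := ltn_ord x'; nia.
  split; apply: val_inj => /=; [exact Hs|]. move: H; rewrite Hs; lia.
Qed.
Lemma rpos_inj t y t' y' : rpos t y = rpos t' y' -> t = t' /\ y = y'.
Proof.
  rewrite /rpos => H.
  have Ht : (t : nat) = t' by have := ltn_ord y; have := ltn_ord y'; nia.
  split; apply: val_inj => /=; [exact Ht|]. move: H; rewrite Ht; lia.
Qed.

Lemma heap_edge_bound u v : heap_edge u v -> u < n /\ v < n.
Proof. rewrite /heap_edge => /andP[/andP[H1 H2] /eqP->]; split; lia. Qed.

Lemma block_edge_bound p u v : block_edge p u v -> u < n /\ v < n.
Proof.
  move=> /existsP[st /existsP[x /andP[/eqP-> /eqP->]]].
  split; [exact: lpos_lt_n | exact: rpos_lt].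
Qed.

Lemma heap_edge_irr u : heap_edge u u = false.
Proof. by apply/negbTE/negP; rewrite /heap_edge => /andP[/andP[H1 H2] /eqP H]; lia. Qed.

(* Left and right block vertices are disjoint. *)
Lemma block_edge_irr p u : block_edge p u u = false.
Proof.
  apply/negbTE/negP => /existsP[st /existsP[x /andP[/eqP H1 /eqP H2]]].
  have := lpos_lt st.1 x; have := rpos_ge st.2 (p st x). rewrite -H1 -H2. lia.
Qed.

Lemma gadj_simple p : simple_graph n (gadj p).
Proof.
  split; [|split].
  - move=> u v; rewrite /gadj.
    by case: (heap_edge u v); case: (heap_edge v u); case: (block_edge p u v);
       case: (block_edge p v u).
  - by move=> u; rewrite /gadj heap_edge_irr block_edge_irr.
  - move=> u v; rewrite /gadj.
    case/orP=> [/heap_edge_bound|/orP[/heap_edge_bound|/orP[/block_edge_bound|/block_edge_bound]]];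
    case=> H1 H2; split; apply/ltP; done.
Qed.

Lemma gadj_bounded p : adj_bounded n (gadj p).
Proof. by have [_ [_ H]] := gadj_simple p. Qed.

Lemma walk_to_root p k u : u < n -> u.+1 < 2 ^ k.+1 ->
  exists q, (length q <= k)%coq_nat /\ is_walk (gadj p) u q 0.
Proof.
  elim: k u => [|k IH] u Hu Hk.
  - exists nil; split => //=. move: Hk; rewrite expn1; lia.
  - case: (posnP u) => [->|Hu0]; first by exists nil; split => /=; lia.
    have [q [Hq Hw]] := IH (u.-1 %/ 2) ltac:(lia) ltac:(move: Hk; rewrite !expnS; lia).
    exists (u.-1 %/ 2 :: q); split => /=; first lia.
    split => //. by rewrite /gadj /heap_edge Hu0 Hu eqxx !orbT.
Qed.

Lemma gadj_short_walks p u v : (u < n)%coq_nat -> (v < n)%coq_nat ->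
  exists q, (length q <= 2 * Nat.log2 n)%coq_nat /\ is_walk (gadj p) u q v.
Proof.
  move=> /ltP Hu /ltP Hv.
  have /andP[_ HK] := log2_bounds (ltac:(lia) : 0 < n).
  have [q1 [H1 W1]] := walk_to_root p Hu (ltac:(lia) : u.+1 < 2 ^ (Nat.log2 n).+1).
  have [q2 [H2 W2]] := walk_to_root p Hv (ltac:(lia) : v.+1 < 2 ^ (Nat.log2 n).+1).
  have [q3 [H3 W3]] := walk_rev (gadj p) (fun a c => proj1 (gadj_simple p) a c) _ _ _ W2.
  exists (q1 ++ q3); split; last exact: walk_app W1 W3.
  rewrite length_app; lia.
Qed.

Definition left_hits v := [set z : ('I_j * 'I_j) * 'I_B | lpos z.1.1 z.2 == v].
Definition right_hits (p : layout) v :=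
  [set z : ('I_j * 'I_j) * 'I_B | rpos z.1.2 (p z.1 z.2) == v].

(* A superset of the neighbourhood of v: heap parent and children for
   internal heap vertices, heap parent and matching partners for leaves. *)
Definition candidates (p : layout) v : seq nat :=
  if v < first_leaf then [:: v.-1 %/ 2; v.*2.+1; v.*2.+2]
  else v.-1 %/ 2 :: [seq rpos z.1.2 (p z.1 z.2) | z <- enum (left_hits v)] ++
                    [seq lpos z.1.1 z.2 | z <- enum (right_hits p v)].

Lemma neighbours_in_candidates p v w : w < n -> gadj p v w -> w \in candidates p v.
Proof.
  move=> Hw; rewrite /gadj /candidates => /orP[H|/orP[H|/orP[H|H]]].
  - move: H; rewrite /heap_edge => /andP[/andP[H1 H2] /eqP H3].
    case: ifP => Hv.
    + rewrite !inE; apply/orP; right.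
      have [E|E] : w = v.*2.+1 \/ w = v.*2.+2 by lia.
      * by rewrite E eqxx.
      * by rewrite E eqxx orbT.
    + exfalso; move: Hv => /negbT; rewrite -leqNgt /first_leaf; lia.
  - move: H => /andP[_ /eqP ->]; case: ifP => _; by rewrite inE eqxx.
  - move: H => /existsP[st /existsP[x /andP[/eqP Hv /eqP Hw']]].
    have Hvo : (v < first_leaf) = false by apply/negbTE; rewrite -leqNgt Hv lpos_ge.
    rewrite Hvo inE mem_cat; apply/orP; right; apply/orP; left.
    rewrite Hw'. apply/mapP; exists (st, x) => //.
    by rewrite mem_enum inE /= Hv eqxx.
  - move: H => /existsP[st /existsP[x /andP[/eqP Hw' /eqP Hv]]].
    have Hvo : (v < first_leaf) = false.
      apply/negbTE; rewrite -leqNgt Hv. exact: leq_trans (leq_addr _ _) (rpos_ge _ _).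
    rewrite Hvo inE mem_cat; apply/orP; right; apply/orP; right.
    rewrite Hw'. apply/mapP; exists (st, x) => //.
    by rewrite mem_enum inE /= Hv eqxx.
Qed.

(* A left vertex meets each right block exactly once, hence at most j times. *)
Lemma card_left_hits v : #|left_hits v| <= j.
Proof.
  rewrite -(@card_in_imset _ _ (fun z : ('I_j * 'I_j) * 'I_B => z.1.2)).
  - by apply: leq_trans (max_card _) _; rewrite card_ord.
  - move=> [[s t] x] [[s' t'] x']; rewrite !inE /= => /eqP H /eqP H' Ht.
    have [Hs Hx] := lpos_inj (etrans H (esym H')). by rewrite Hs Hx Ht.
Qed.

Lemma card_right_hits p v : #|right_hits p v| <= j.
Proof.
  rewrite -(@card_in_imset _ _ (fun z : ('I_j * 'I_j) * 'I_B => z.1.1)).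
  - by apply: leq_trans (max_card _) _; rewrite card_ord.
  - move=> [[s t] x] [[s' t'] x']; rewrite !inE /= => /eqP H /eqP H' Hs.
    have [Ht Hx] := rpos_inj (etrans H (esym H')). subst s' t'.
    by rewrite (perm_inj Hx).
Qed.

Lemma left_or_right_hits p v : #|left_hits v| = 0 \/ #|right_hits p v| = 0.
Proof.
  case: (set_0Vmem (left_hits v)) => [->|[z Hz]]; [left; apply: cards0|right].
  apply/eqP; rewrite cards_eq0; apply/eqP/setP => z'; rewrite !inE.
  apply/negbTE/negP => /eqP H. move: Hz; rewrite inE => /eqP H'.
  have := lpos_lt z.1.1 z.2; have := rpos_ge z'.1.2 (p z'.1 z'.2).
  rewrite H H'; lia.
Qed.

Lemma gadj_degree p v : degree n (gadj p) v <= maxn 3 j.+1.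
Proof.
  have size_cand : size (candidates p v) <= maxn 3 j.+1.
    rewrite /candidates; case: ifP => _ /=; first by rewrite leq_maxl.
    rewrite size_cat !size_map -!cardE.
    have := card_left_hits v; have := card_right_hits p v; have := left_or_right_hits p v.
    lia.
  have filter_count (f : nat -> bool) a m :
      length (List.filter f (List.seq a m)) = count f (iota a m).
    by elim: m a => [|m IH] a //=; case: (f a) => /=; rewrite IH.
  rewrite /degree filter_count -size_filter.
  apply: leq_trans size_cand.
  apply: uniq_leq_size; first exact: filter_uniq (iota_uniq 0 n).
  move=> w; rewrite mem_filter mem_iota add0n => /andP[H1 H2].
  exact: neighbours_in_candidates.
Qed.

Lemma gadj_admissible p : 1 <= j' -> admissible n j.+1 (gadj p).
Proof.
  move=> Hj; split; [exact: gadj_simple|split].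
  - move=> u v Hu Hv; have [q [_ W]] := gadj_short_walks p Hu Hv; by exists q.
  - move=> v _; apply/leP; apply: leq_trans (gadj_degree p v) _. lia.
Qed.

Lemma gadj_answers p u v :
  dist_oracle n (gadj p) u v \in rcons (iota 0 (2 * Nat.log2 n).+1) n.
Proof.
  rewrite mem_rcons inE mem_iota add0n.
  have [/leP H|->] := dist_oracle_answers _ _ _ (@gadj_bounded p) (@gadj_short_walks p) u v.
  - by rewrite orbC ltnS H.
  - by rewrite eqxx.
Qed.

(* Distinct layouts give distinct graphs: a matching edge of one is missing
   from the other. *)
Lemma gadj_inj (p p' : layout) : p != p' ->
  exists u v, (u < n) && (v < n) && (gadj p u v != gadj p' u v).
Proof.
  move=> Hne.
  have [st Hst] : exists st, p st != p' st.
    apply/existsP; apply: contraR Hne => /existsPn H.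
    by apply/eqP/ffunP => st; apply/eqP/negbNE; exact: H.
  have [x Hx] : exists x, p st x != p' st x.
    apply/existsP; apply: contraR Hst => /existsPn H.
    by apply/eqP/permP => x; apply/eqP/negbNE; exact: H.
  have L1 := lpos_lt st.1 x; have L2 := lpos_ge st.1 x.
  have R1 := rpos_ge st.2 (p st x); have R2 := rpos_lt st.2 (p st x).
  exists (lpos st.1 x), (rpos st.2 (p st x)).
  rewrite lpos_lt_n R2 /=.
  have -> : gadj p (lpos st.1 x) (rpos st.2 (p st x)).
    rewrite /gadj /block_edge; apply/or4P; constructor 3.
    apply/existsP; exists st; apply/existsP; exists x; by rewrite !eqxx.
  suff -> : gadj p' (lpos st.1 x) (rpos st.2 (p st x)) = false by [].
  apply/negbTE; rewrite !negb_or; apply/and4P; split.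
  - rewrite /heap_edge; apply/negP => /andP[_ /eqP E]. move: L2 R2; rewrite /first_leaf E; lia.
  - rewrite /heap_edge; apply/negP => /andP[_ /eqP E]. move: L1 R1; rewrite E.
    move: (first_leaf + j * B) => m. lia.
  - apply/negP => /existsP[st' /existsP[x' /andP[/eqP E1 /eqP E2]]].
    have [Hs Hxx] := lpos_inj E1. have [Ht Hy] := rpos_inj E2.
    have Est : st = st' by case: st Hs Ht {Hst Hx L1 L2 R1 R2 E1 E2 Hy};
                           case: st' => a c a' c' /= -> ->.
    by move: Hx; rewrite Hy Est Hxx eqxx.
  - apply/negP => /existsP[st' /existsP[x' /andP[/eqP E1 /eqP E2]]].
    have := lpos_lt st'.1 x'. move: L1 R1; rewrite -E1.
    move: (first_leaf + j * B) => m. lia.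
Qed.

End Layouts.

(* If an algorithm whose oracle answers
   always lie in S recovers every graph g x (x in P) of an injectively indexed
   family with fewer than q queries, then #|P| <= (size S)^q: the leaves
   reachable by the family form a tree of depth < q and branching size S. *)
Lemma decision_tree_count (X : finType) (n : nat) (g : X -> nat -> nat -> bool)
  (orc : X -> nat -> nat -> nat) (S : seq nat)
  (Hinj : forall x y, x != y -> exists u v, (u < n) && (v < n) && (g x u v != g y u v))
  (HS : forall x u v, orc x u v \in S) (HS0 : 0 < size S) :
  forall q A (P : {set X}), (forall x, x \in P -> run_cost A (orc x) < q /\
      forall u v, u < n -> v < n -> run_output A (orc x) u v = g x u v) ->
  #|P| <= (size S) ^ q.
Proof.
  elim=> [|q IH] A P H.
  - case: (set_0Vmem P) => [->|[x Hx]]; first by rewrite cards0.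
    by have [] := H x Hx.
  - case: A H => [f|u v k] H.
    + (* an output leaf is correct for at most one graph *)
      apply: leq_trans (_ : 1 <= _); last by rewrite expn_gt0 HS0.
      apply/card_le1_eqP => x y Hx Hy.
      apply/eqP/negPn/negP => Hne.
      have [a [c /andP[/andP[Ha Hc] Hd]]] := Hinj _ _ Hne.
      have [_ E1] := H x Hx; have [_ E2] := H y Hy.
      by move: Hd; rewrite -(E1 a c Ha Hc) -(E2 a c Ha Hc) eqxx.
    + (* a query splits P according to the answer; each branch costs one less *)
      have branches : forall S' : seq nat,
          #|[set x in P | orc x u v \in S']| <= size S' * (size S) ^ q.
      { elim=> [|a S' IHS].
        - rewrite mul0n leqn0 cards_eq0; apply/eqP/setP => x; by rewrite !inE andbF.
        - apply: leq_trans (_ : #|[set x in P | orc x u v == a] :|: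
                                  [set x in P | orc x u v \in S']| <= _).
            apply: subset_leq_card; apply/subsetP => x; rewrite !inE.
            by case/andP=> -> /=; case/orP=> ->; rewrite ?orbT.
          apply: leq_trans (leq_card_setU _ _) _.
          rewrite /= mulSn leq_add //.
          apply: IH (k a) _ _ => x; rewrite inE => /andP[Hx /eqP Ha].
          by have [/=] := H x Hx; rewrite Ha. }
      have -> : P = [set x in P | orc x u v \in S].
        by apply/setP => x; rewrite !inE HS andbT.
      by rewrite expnS; apply: branches.
Qed.

Lemma pow_mul_fact_le h k : h ^ k * h`! <= (h + k)`!.
Proof.
  elim: k => [|k IH]; first by rewrite expn0 mul1n addn0.
  rewrite addnS factS expnS -mulnA. apply: leq_mul; [lia|exact IH].
Qed.

Lemma half_pow_le_fact B : (B %/ 2) ^ (B %/ 2) <= B`!.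
Proof.
  set h := B %/ 2.
  apply: leq_trans (_ : h ^ h * h`! <= _).
    by rewrite -{1}[h ^ h]muln1 leq_mul2l fact_gt0 orbT.
  apply: leq_trans (pow_mul_fact_le h h) _.
  by apply: leq_fact; rewrite /h; lia.
Qed.

(* With s possible answers, Q = h j^2 log2 h / (log2 s + 1) queries (h = B/2)
   cannot distinguish all (B!)^(j^2) layouts: s^Q <= 2^(h j^2 log2 h)
   <= h^(h j^2) <= (B!)^(j^2), the first inequality being strict. *)
Lemma few_queries_few_leaves s B j : 0 < s -> 1 < B -> 0 < j ->
  s ^ ((B %/ 2) * j * j * Nat.log2 (B %/ 2) %/ (Nat.log2 s + 1)) < (B`!) ^ (j * j).
Proof.
  move=> Hs HB Hj.
  set h := B %/ 2. set L := Nat.log2 s. set Q := _ %/ _.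
  have Hh : 0 < h by rewrite /h; lia.
  have HhB : h ^ (h * j * j) <= (B`!) ^ (j * j).
    by rewrite -mulnA expnM leq_exp2r ?half_pow_le_fact //; nia.
  case: (posnP Q) => [->|HQ].
    rewrite expn0; apply: (@leq_trans (B`!)); first exact: (leq_fact HB).
    by rewrite -{1}[B`!]expn1 leq_pexp2l ?fact_gt0 //; nia.
  have /andP[_ HsL] := log2_bounds Hs.
  have /andP[Hh1 _] := log2_bounds Hh.
  apply: (@leq_trans ((2 ^ L.+1) ^ Q)); first by rewrite ltn_exp2r.
  rewrite -expnM; apply: leq_trans (_ : 2 ^ (Nat.log2 h * (h * j * j)) <= _).
    rewrite leq_exp2l //. have := leq_divM (h * j * j * Nat.log2 h) (L + 1).
    rewrite -/Q. nia.
  rewrite expnM; apply: leq_trans HhB.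
  by rewrite leq_exp2r //; nia.
Qed.

(* The parameters of the hard family for n vertices and maximum degree D:
   blocks of size [block_size n D] fill half of the leaves, and
   [query_bound n D] is the resulting lower bound on the number of queries. *)
Definition block_size n D := (n - n %/ 2) %/ (2 * D.-1).
Definition half_block n D := block_size n D %/ 2.
Definition query_bound n D :=
  half_block n D * D.-1 * D.-1 * Nat.log2 (half_block n D) %/ answer_bits n.

Lemma lower_bound_nat n D A : (0 < n)%coq_nat -> (3 <= D)%coq_nat ->
  (1 <= half_block n D)%coq_nat -> reconstructs n D A ->
  exists adj, admissible n D adj /\ (query_bound n D <= run_cost A (dist_oracle n adj))%coq_nat.
Proof.
  move=> /ltP Hn /leP HD /leP HB HA.
  have [j' Ej] : exists j', D = j'.+2 by exists (D - 2); lia.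
  subst D. rewrite /query_bound /half_block /= in HB *.
  set B := block_size n j'.+2 in HB *.
  have [b Eb] : exists b, B = b.+1 by exists B.-1; lia.
  have fits : n %/ 2 + 2 * (j'.+1 * b.+1) <= n.
    have : B * (2 * j'.+1) <= n - n %/ 2 := leq_divM _ _.
    rewrite Eb; nia.
  set Q := _ %/ answer_bits n.
  case: (boolP [exists p : {ffun 'I_j'.+1 * 'I_j'.+1 -> {perm 'I_b.+1}},
                  Q <= run_cost A (dist_oracle n (gadj n p))]).
  - move/existsP => [p Hp]; exists (gadj n p); split; last exact/leP.
    by apply: (gadj_admissible fits p); lia.
  - move/existsPn => fast; exfalso.
    have all_fast : forall p, p \in [set: {ffun 'I_j'.+1 * 'I_j'.+1 -> {perm 'I_b.+1}}] ->
        run_cost A (dist_oracle n (gadj n p)) < Q /\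
        forall u v, u < n -> v < n -> run_output A (dist_oracle n (gadj n p)) u v = gadj n p u v.
      move=> p _; split; first by rewrite ltnNge fast.
      move=> u v Hu Hv; apply: HA; [|exact/ltP|exact/ltP].
      by apply: (gadj_admissible fits p); lia.
    have := decision_tree_count (gadj_inj fits) (gadj_answers fits) _ all_fast.
    rewrite size_rcons cardsT card_ffun card_Sn card_prod card_ord size_iota /=.
    move=> /(_ isT); apply/negP; rewrite -ltnNge -Eb /Q.
    have -> : answer_bits n = Nat.log2 (2 * Nat.log2 n).+2 + 1.
      by rewrite /answer_bits; congr (Nat.log2 _ + 1); lia.
    by apply: few_queries_few_leaves; lia.
Qed.

(* Half the vertices are split into 2 (D - 1) blocks of size about 2 h. *)
Lemma half_block_large n D : (3 <= D)%coq_nat ->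
  (n < 8 * (D - 1) * (half_block n D + 1))%coq_nat.
Proof.
  move=> /leP HD; apply/ltP.
  rewrite /half_block /block_size.
  set j := D.-1. set Bq := (n - n %/ 2) %/ (2 * j).
  have E1 := divn_eq (n - n %/ 2) (2 * j).
  have E2 := ltn_pmod (n - n %/ 2) (ltac:(rewrite /j; lia) : 0 < 2 * j).
  have E3 := divn_eq Bq 2.
  have E4 := ltn_pmod Bq (isT : 0 < 2).
  move: E1 E2 E3 E4; rewrite -/Bq.
  move: ((n - n %/ 2) %% (2 * j)) (Bq %% 2) => r1 r2 E1 E2 E3 E4.
  have : n <= 2 * (n - n %/ 2) by lia.
  rewrite /j; nia.
Qed.

Lemma query_bound_spec n D :
  (half_block n D * (D - 1) * (D - 1) * Nat.log2 (half_block n D)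
     < (query_bound n D + 1) * answer_bits n)%coq_nat.
Proof.
  apply/ltP; rewrite /query_bound.
  have Hbits : 0 < answer_bits n by rewrite /answer_bits; lia.
  have := ltn_ceil (half_block n D * D.-1 * D.-1 * Nat.log2 (half_block n D)) Hbits.
  have -> : D - 1 = D.-1 by lia.
  lia.
Qed.

End HardFamily.

Open Scope R_scope.

Lemma ln_monotone a b : 0 < a -> a <= b -> ln a <= ln b.
Proof.
  intros Ha Hab. destruct (Rle_lt_or_eq_dec _ _ Hab) as [H|H].
  - left; apply ln_increasing; auto.
  - subst; lra.
Qed.

Lemma ln_lt_self y : 0 < y -> ln y < y.
Proof.
  intros Hy. pose proof (exp_ineq1 y ltac:(lra)).
  rewrite <- (ln_exp y) at 2. apply ln_increasing; lra.
Qed.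

Lemma ln_2_lt_1 : ln 2 < 1.
Proof.
  pose proof (exp_ineq1 1 ltac:(lra)).
  rewrite <- (ln_exp 1). apply ln_increasing; lra.
Qed.

Lemma ln_lt_log2_succ h : (1 <= h)%nat -> ln (INR h) < INR (Nat.log2 h) + 1.
Proof.
  intros Hh. destruct (Nat.log2_spec h ltac:(lia)) as [_ Hs].
  apply lt_INR in Hs. rewrite pow_INR in Hs. replace (INR 2) with 2 in Hs by (simpl; lra).
  assert (Hh0 : 0 < INR h) by (apply lt_0_INR; lia).
  apply ln_increasing in Hs; [|exact Hh0].
  rewrite ln_pow, S_INR in Hs by lra.
  pose proof ln_2_lt_1. pose proof ln_lt_2. pose proof (pos_INR (Nat.log2 h)). nra.
Qed.

Lemma log2_le_twice_ln n : (1 <= n)%nat -> INR (Nat.log2 n) <= 2 * ln (INR n).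
Proof.
  intros Hn. destruct (Nat.log2_spec n ltac:(lia)) as [Hs _].
  apply le_INR in Hs. rewrite pow_INR in Hs. replace (INR 2) with 2 in Hs by (simpl; lra).
  apply ln_monotone in Hs; [|apply pow_lt; lra].
  rewrite ln_pow in Hs by lra.
  pose proof ln_lt_2. pose proof (pos_INR (Nat.log2 n)). nra.
Qed.

(* From n = 1000 on, ln n >= 5, since exp 5 <= 3^5. *)
Lemma ln_ge_5 x : 1000 <= x -> 5 <= ln x.
Proof.
  intros Hx. rewrite <- (ln_exp 5). apply ln_monotone; [apply exp_pos|].
  replace 5 with (1 + 1 + 1 + 1 + 1) by lra. rewrite !exp_plus.
  pose proof exp_le_3. pose proof (exp_pos 1).
  assert (exp 1 * exp 1 <= 9) by nra.
  assert (exp 1 * exp 1 * exp 1 <= 27) by nra.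
  assert (exp 1 * exp 1 * exp 1 * exp 1 <= 81) by nra.
  nra.
Qed.

Lemma answer_bits_le n : (1000 <= n)%nat -> INR (answer_bits n) <= 5 * ln (ln (INR n)).
Proof.
  intros Hn. unfold answer_bits.
  assert (Hx : 1000 <= INR n) by (replace 1000 with (INR 1000) by (simpl; lra); apply le_INR; lia).
  pose proof (ln_ge_5 _ Hx) as Hlx.
  pose proof (log2_le_twice_ln n ltac:(lia)) as Hk.
  set (k := INR (Nat.log2 n)) in *. assert (0 <= k) by apply pos_INR.
  set (L := Nat.log2 (2 * Nat.log2 n + 2)).
  (* 2^L <= 2 log2 n + 2 <= (ln n)^2, so L <= 2 ln ln n / ln 2 *)
  assert (HL : INR L * ln 2 <= 2 * ln (ln (INR n))).
  { destruct (Nat.log2_spec (2 * Nat.log2 n + 2) ltac:(lia)) as [Hs _].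
    apply le_INR in Hs. rewrite pow_INR, plus_INR, mult_INR in Hs. replace (INR 2) with 2 in Hs by (simpl; lra).
    fold L k in Hs.
    apply ln_monotone in Hs; [|apply pow_lt; lra].
    rewrite ln_pow in Hs by lra.
    replace (2 * ln (ln (INR n))) with (ln (ln (INR n) * ln (INR n)))
      by (rewrite ln_mult by lra; ring).
    apply (Rle_trans _ _ _ Hs). apply ln_monotone; nra. }
  assert (Hll : 1 <= ln (ln (INR n))).
  { rewrite <- (ln_exp 1). apply ln_monotone; [apply exp_pos|]. pose proof exp_le_3; lra. }
  rewrite plus_INR. simpl (INR 1).
  pose proof ln_lt_2. pose proof (pos_INR L). nra.
Qed.

Section Regime.
Variables n D : nat.
Hypothesis n_large : (1000 <= n)%nat.
Hypothesis D_ge_3 : (3 <= D)%nat.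
Hypothesis D_small : INR D <= 1/32 * sqrt (INR n).

Lemma INR_n_large : 1000 <= INR n.
Proof. replace 1000 with (INR 1000) by (simpl; lra). apply le_INR; lia. Qed.

(* The half block h exceeds 4 sqrt n - 1, because n < 8 (D - 1) (h + 1). *)
Lemma half_block_exceeds_sqrt : 4 * sqrt (INR n) < INR (HardFamily.half_block n D) + 1.
Proof.
  pose proof (@HardFamily.half_block_large n D D_ge_3) as Hlt.
  apply lt_INR in Hlt. rewrite !mult_INR, plus_INR, minus_INR in Hlt by lia.
  replace (INR 8) with 8 in Hlt by (simpl; lra).
  replace (INR 3) with 3 in * by (simpl; lra). simpl (INR 1) in Hlt.
  pose proof INR_n_large. pose proof (sqrt_sqrt (INR n) ltac:(lra)).
  pose proof (sqrt_pos (INR n)). pose proof (pos_INR (HardFamily.half_block n D)).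
  assert (3 <= INR D) by (replace 3 with (INR 3) by (simpl; lra); apply le_INR; lia).
  assert (31 <= sqrt (INR n)) by nra.
  nra.
Qed.

Lemma half_block_pos : (1 <= HardFamily.half_block n D)%nat.
Proof.
  pose proof half_block_exceeds_sqrt. pose proof INR_n_large.
  pose proof (sqrt_sqrt (INR n) ltac:(lra)). pose proof (sqrt_pos (INR n)).
  apply (INR_lt 0). simpl (INR 0). nra.
Qed.

Lemma log2_half_block_ge : ln (INR n) / 4 <= INR (Nat.log2 (HardFamily.half_block n D)).
Proof.
  pose proof half_block_exceeds_sqrt. pose proof INR_n_large.
  pose proof (ln_lt_log2_succ _ half_block_pos).
  pose proof (ln_ge_5 _ INR_n_large). pose proof (sqrt_pos (INR n)).
  set (sq := sqrt (INR n)) in *. set (h := HardFamily.half_block n D) in *.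
  assert (Hsq : sq * sq = INR n) by (apply sqrt_sqrt; lra).
  assert (31 <= sq) by nra.
  assert (Hln : ln (INR n) = 2 * ln sq) by (rewrite <- Hsq, ln_mult by lra; ring).
  assert (ln sq <= ln (INR h)) by (apply ln_monotone; lra).
  lra.
Qed.

Lemma block_edges_ge :
  INR D * INR n / 24 <= (INR D - 1) * (INR D - 1) * INR (HardFamily.half_block n D).
Proof.
  pose proof (@HardFamily.half_block_large n D D_ge_3) as Hlt.
  apply lt_INR in Hlt. rewrite !mult_INR, plus_INR, minus_INR in Hlt by lia.
  replace (INR 8) with 8 in Hlt by (simpl; lra). simpl (INR 1) in Hlt.
  pose proof INR_n_large. pose proof (sqrt_sqrt (INR n) ltac:(lra)).
  pose proof (sqrt_pos (INR n)).
  assert (3 <= INR D) by (replace 3 with (INR 3) by (simpl; lra); apply le_INR; lia).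
  set (h := HardFamily.half_block n D) in *. pose proof (pos_INR h).
  assert (INR D * INR D <= INR n / 1024) by nra.
  nra.
Qed.

Lemma query_bound_large :
  INR D * INR n * ln (INR n) / ln (ln (INR n)) <= 960 * INR (HardFamily.query_bound n D).
Proof.
  pose proof (@HardFamily.query_bound_spec n D) as Hq.
  apply lt_INR in Hq. rewrite !mult_INR, !plus_INR, minus_INR in Hq by lia.
  simpl (INR 1) in Hq.
  pose proof log2_half_block_ge. pose proof block_edges_ge.
  pose proof (answer_bits_le n n_large). pose proof INR_n_large.
  pose proof (ln_ge_5 _ INR_n_large).
  assert (1 <= ln (ln (INR n))).
  { rewrite <- (ln_exp 1). apply ln_monotone; [apply exp_pos|]. pose proof exp_le_3; lra. }
  assert (ln (ln (INR n)) < ln (INR n)) by (apply ln_lt_self; lra).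
  assert (3 <= INR D) by (replace 3 with (INR 3) by (simpl; lra); apply le_INR; lia).
  set (q := INR (HardFamily.query_bound n D)) in *. assert (0 <= q) by apply pos_INR.
  set (lh := INR (Nat.log2 (HardFamily.half_block n D))) in *.
  set (hb := INR (HardFamily.half_block n D)) in *.
  set (d := INR D) in *. set (x := INR n) in *. set (lx := ln x) in *.
  set (llx := ln lx) in *. set (bits := INR (answer_bits n)) in *.
  (* d x lx / 96 <= hb (d-1)^2 lh < (q + 1) bits <= 5 (q + 1) llx *)
  assert (d * x * lx / 96 <= hb * (d - 1) * (d - 1) * lh).
  { assert (0 <= d * x / 24) by nra. nra. }
  assert ((q + 1) * bits <= (q + 1) * (5 * llx)) by (apply Rmult_le_compat_l; lra).
  assert (d * x * lx < 480 * (q + 1) * llx) by lra.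
  assert (960 * llx <= d * x * lx).
  { assert (3000 <= d * x) by nra.
    assert (0 <= (d * x - 960) * lx) by (apply Rmult_le_pos; lra).
    nra. }
  apply (Rmult_le_reg_r llx); [lra|].
  unfold Rdiv. rewrite Rmult_assoc, Rinv_l by lra. nra.
Qed.

End Regime.

Theorem theorem4 (Delta : nat -> nat)
  (H3 : exists N0, forall n, (N0 <= n)%nat -> (3 <= Delta n)%nat)
  (Hsmall : forall eps, eps > 0 -> exists N, forall n, (N <= n)%nat ->
              INR (Delta n) <= eps * sqrt (INR n)) :
  exists c, c > 0 /\ exists N, forall n, (N <= n)%nat ->
    forall A : algo, reconstructs n (Delta n) A ->
      exists adj, admissible n (Delta n) adj /\
        INR (run_cost A (dist_oracle n adj))
          >= c * INR (Delta n) * INR n * ln (INR n) / ln (ln (INR n)).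
Proof.
  destruct H3 as [N0 HN0].
  destruct (Hsmall (1/32)) as [N1 HN1]; [lra|].
  exists (1/960). split; [lra|]. exists (N0 + N1 + 1000)%nat.
  intros n Hn A HA.
  assert (Hn_large : (1000 <= n)%nat) by lia.
  assert (HD3 : (3 <= Delta n)%nat) by (apply HN0; lia).
  assert (HDs : INR (Delta n) <= 1/32 * sqrt (INR n)) by (apply HN1; lia).
  destruct (@HardFamily.lower_bound_nat n (Delta n) A) as [adj [Hadm Hcost]];
    [lia | exact HD3 | exact (half_block_pos n (Delta n) Hn_large HD3 HDs) | exact HA |].
  exists adj; split; [exact Hadm|].
  pose proof (query_bound_large n (Delta n) Hn_large HD3 HDs).
  apply le_INR in Hcost.
  unfold Rdiv in *. lra.
Qed.
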